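(* Let $(Q,P)$ be a weakly quasi-lattice ordered group and let $\Lambda$ be a $P$-graph. Then: (1) $\mathrm{FA}(\Lambda)$ is a right ideal in $\Lambda$, i.e. if $\lambda\in\mathrm{FA}(\Lambda)$ and $s(\lambda)=r(\lambda')$ then $\lambda\lambda'\in\mathrm{FA}(\Lambda)$; (2) if $\mu\delta\in\mathrm{FA}(\Lambda)$ then $\delta\in\mathrm{FA}(\Lambda)$; (3) $\mathrm{FA}(\Lambda)$ is closed under the source map $s$; (4) $\mathrm{FA}(\Lambda)$ is not necessarily closed under the range map $r$, i.e. there exist such $(Q,P)$ and a $P$-graph $\Lambda$ with $\lambda\in\mathrm{FA}(\Lambda)$ but $r(\lambda)\notin\mathrm{FA}(\Lambda)$; (5) if $\mu\in\mathrm{FA}(\Lambda)$ then $s(\mu)\Lambda\subseteq\mathrm{FA}(\Lambda)$; (6) if $\mu,\nu\in\mathrm{FA}(\Lambda)$ then there is a finite $J\subseteq\mathrm{FA}(\Lambda)$ such that $\mu\Lambda\cap\nu\Lambda=\bigcup_{\lambda\in J}\lambda\Lambda$.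
   Context: $(Q,P)$ weakly quasi-lattice ordered: $Q$ a discrete group, $P\subseteq Q$ a subsemigroup containing the identity $e$ with $P\cap P^{-1}=\{e\}$, and, with $p\le r$ meaning $pq=r$ for some $q\in P$, any two elements of $P$ with a common upper bound have a least common upper bound. A $P$-graph is a countable small category $\Lambda$ (identities $\Lambda^{(0)}$, range/source $r,s$) with a functor $d:\Lambda\to P$ with unique factorisation (if $d(\lambda)=pq$ there are unique $\mu,\nu$ with $\lambda=\mu\nu$, $d(\mu)=p$, $d(\nu)=q$). For $\lambda\in\Lambda$, $\lambda\Lambda=\{\lambda\mu: \mu\in\Lambda, s(\lambda)=r(\mu)\}$. $\Lambda$ is finitely aligned at $(\mu,\nu)$ if there is a finite (possibly empty) $J\subseteq\Lambda$ with $\mu\Lambda\cap\nu\Lambda=\bigcup_{\lambda\in J}\lambda\Lambda$; $\Lambda$ is finitely aligned at $\lambda$ if it is finitely aligned at $(\mu,\nu)$ for every $\mu\in\lambda\Lambda$ and $\nu\in\Lambda$; $\mathrm{FA}(\Lambda)$ is the set of $\lambda\in\Lambda$ at which $\Lambda$ is finitely aligned. *)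

From Stdlib Require Import List.
Import ListNotations.
Set Implicit Arguments.
Unset Strict Implicit.

Record Group : Type := {
  gcar :> Type;
  gmul : gcar -> gcar -> gcar;
  gone : gcar;
  ginv : gcar -> gcar;
  gmulA : forall x y z, gmul x (gmul y z) = gmul (gmul x y) z;
  gmul1l : forall x, gmul gone x = x;
  gmul1r : forall x, gmul x gone = x;
  gmulVl : forall x, gmul (ginv x) x = gone;
  gmulVr : forall x, gmul x (ginv x) = gone
}.

Section WQLO.
Variables (Q : Group) (P : Q -> Prop).

Definition ple (p r : Q) : Prop := exists q, P q /\ gmul p q = r.

Definition WQLO : Prop :=
  (forall p q, P p -> P q -> P (gmul p q)) /\
  P (@gone Q) /\
  (forall x, P x -> P (ginv x) -> x = @gone Q) /\
  (forall p q, P p -> P q ->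
     (exists u, P u /\ ple p u /\ ple q u) ->
     exists l, P l /\ ple p l /\ ple q l /\
       (forall u, P u -> ple p u -> ple q u -> ple l u)).
End WQLO.

(** A P-graph: a countable small category (given by its morphisms; the
    objects are identified with the identity morphisms, i.e. the values of
    r and s), with a degree functor d : Λ -> P having unique factorisation.
    [comp x y] is the composite xy; it is only meaningful when s x = r y. *)
Record PGraph (Q : Group) (P : Q -> Prop) : Type := {
  pcar :> Type;
  pr : pcar -> pcar;
  ps : pcar -> pcar;
  comp : pcar -> pcar -> pcar;
  deg : pcar -> Q;
  pcount : exists f : pcar -> nat, forall x y, f x = f y -> x = y;
  pr_r : forall x, pr (pr x) = pr x;
  ps_r : forall x, ps (pr x) = pr x;
  pr_s : forall x, pr (ps x) = ps x;
  ps_s : forall x, ps (ps x) = ps x;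
  comp_r : forall x y, ps x = pr y -> pr (comp x y) = pr x;
  comp_s : forall x y, ps x = pr y -> ps (comp x y) = ps y;
  compA : forall x y z, ps x = pr y -> ps y = pr z ->
            comp x (comp y z) = comp (comp x y) z;
  comp1l : forall x, comp (pr x) x = x;
  comp1r : forall x, comp x (ps x) = x;
  deg_P : forall x, P (deg x);
  deg_id : forall x, deg (pr x) = @gone Q;
  deg_comp : forall x y, ps x = pr y -> deg (comp x y) = gmul (deg x) (deg y);
  fact_ex : forall x p q, P p -> P q -> deg x = gmul p q ->
    exists m n, ps m = pr n /\ x = comp m n /\ deg m = p /\ deg n = q;
  fact_uniq : forall x p q m n m' n', P p -> P q ->
    ps m = pr n -> x = comp m n -> deg m = p -> deg n = q ->
    ps m' = pr n' -> x = comp m' n' -> deg m' = p -> deg n' = q ->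
    m = m' /\ n = n'
}.

Section FA.
Variables (Q : Group) (P : Q -> Prop) (L : PGraph P).

Definition inRight (l x : L) : Prop :=
  exists a : L, ps l = pr a /\ x = comp l a.

Definition fin_aligned_at (m n : L) : Prop :=
  exists J : list L, forall x,
    (inRight m x /\ inRight n x) <-> (exists l, In l J /\ inRight l x).

Definition FA (l : L) : Prop :=
  forall m, inRight l m -> forall n : L, fin_aligned_at m n.
End FA.

(* Everything about FA(Λ) follows from left cancellation in a P-graph,
   which is a consequence of unique factorisation: the map ξ ↦ μξ is a bijection
   from s(μ)Λ onto μΛ, and it carries ξΛ ∩ νΛ onto μξΛ ∩ μνΛ. So finite alignment
   at (μξ, μν) can be pulled back to (ξ, ν), which gives (2); (1) is immediate
   because (λλ')Λ ⊆ λΛ, and (3), (5), (6) are combinations of the two.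
   For (4) take P = ℕ² in ℤ² and the graph with edges μ : A → V, ν : B → V of
   degrees (1,0), (0,1) and infinitely many commuting squares μα_i = νβ_i into a
   sink C: then μΛ ∩ νΛ = {μα_i | i ∈ ℕ} is not finitely generated, so V is not
   in FA(Λ), while each μα_i has no proper extension and lies in FA(Λ). *)
From Stdlib Require Import List Classical ZArith Lia.
Import ListNotations.
Set Implicit Arguments.
Unset Strict Implicit.

Lemma map_onto_list (A B : Type) (f : A -> B) (S : A -> Prop) (l' : list B) :
  (forall b, In b l' -> exists a, S a /\ f a = b) ->
  exists l, (forall a, In a l -> S a) /\ map f l = l'.
Proof.
  induction l' as [|b l' IH]; intros Hl'.
  - exists []. split; [intros _ []|reflexivity].
  - destruct (Hl' b (or_introl eq_refl)) as [a [Sa <-]].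
    destruct IH as [l [Sl <-]].
    { intros b' Hb'. apply Hl'. now right. }
    exists (a :: l). split; [|reflexivity].
    intros a' [<-|Ha']; auto.
Qed.

Lemma gmul_cancel_l (Q : Group) (g x y : Q) : gmul g x = gmul g y -> x = y.
Proof.
  intro H.
  rewrite <- (gmul1l x), <- (gmul1l y), <- (gmulVl g), <- !gmulA, H.
  reflexivity.
Qed.

Section PGraphAlignment.
Variables (Q : Group) (P : Q -> Prop) (L : PGraph P).

Lemma comp_cancel_l (m y y' : L) :
  ps m = pr y -> ps m = pr y' -> comp m y = comp m y' -> y = y'.
Proof.
  intros Hy Hy' E.
  assert (Hdeg : deg y' = deg y).
  { apply (gmul_cancel_l (g := deg m)). rewrite <- !deg_comp by assumption.
    now rewrite E. }
  exact (proj2 (@fact_uniq _ _ L (comp m y) _ _ m y m y' (deg_P m) (deg_P y)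
                 Hy eq_refl eq_refl eq_refl Hy' E eq_refl Hdeg)).
Qed.

Lemma inRight_refl (l : L) : inRight l l.
Proof. exists (ps l). split; [symmetry; apply pr_s | symmetry; apply comp1r]. Qed.

Lemma inRight_trans (l x y : L) : inRight l x -> inRight x y -> inRight l y.
Proof.
  intros [a [Ha ->]] [b [Hb ->]].
  rewrite comp_s in Hb by assumption.
  exists (comp a b). split.
  - rewrite comp_r; assumption.
  - symmetry; apply compA; assumption.
Qed.

Lemma inRight_comp (l l' : L) : ps l = pr l' -> inRight l (comp l l').
Proof. intro H. now exists l'. Qed.

Lemma inRight_pr (l x : L) : inRight l x -> pr x = pr l.
Proof. intros [a [Ha ->]]. apply comp_r; assumption. Qed.

Lemma inRight_comp2 (m z x : L) :
  ps m = pr z -> ps m = pr x -> inRight (comp m z) (comp m x) <-> inRight z x.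
Proof.
  intros Hz Hx. split.
  - intros [c [Hc E]]. rewrite comp_s in Hc by assumption.
    rewrite <- compA in E by assumption.
    exists c. split; [assumption|].
    apply (comp_cancel_l (m := m)); [assumption | rewrite comp_r; assumption | assumption].
  - intros [c [Hc ->]]. exists c. split.
    + rewrite comp_s; assumption.
    + apply compA; assumption.
Qed.

Lemma fin_aligned_at_pr_neq (m n : L) : pr m <> pr n -> fin_aligned_at m n.
Proof.
  intro Hmn. exists []. intro x. split.
  - intros [Hm Hn]. exfalso. apply Hmn.
    now rewrite <- (inRight_pr Hm), (inRight_pr Hn).
  - intros [l [[] _]].
Qed.

Lemma fin_aligned_at_of_right_singleton (m n : L) :
  (forall x, inRight m x -> x = m) -> fin_aligned_at m n.
Proof.
  intro Hm. destruct (classic (inRight n m)) as [Hn|Hn].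
  - exists [m]. intro x. split.
    + intros [Hx _]. rewrite (Hm x Hx). exists m. split; [now left | apply inRight_refl].
    + intros [l [[<-|[]] Hx]]. rewrite (Hm x Hx). split; [apply inRight_refl | exact Hn].
  - exists []. intro x. split.
    + intros [Hx Hnx]. rewrite (Hm x Hx) in Hnx. contradiction.
    + intros [l [[] _]].
Qed.

Lemma fin_aligned_at_comp_inv (m x n : L) :
  ps m = pr x -> ps m = pr n ->
  fin_aligned_at (comp m x) (comp m n) -> fin_aligned_at x n.
Proof.
  intros Hx Hn [J' HJ'].
  assert (HmJ' : forall l, In l J' -> exists y, ps m = pr y /\ comp m y = l).
  { intros l Hl.
    assert (Hxl : inRight (comp m x) l) by (apply HJ'; exists l; auto using inRight_refl).
    destruct (inRight_trans (inRight_comp Hx) Hxl) as [y [Hy ->]]. now exists y. }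
  destruct (map_onto_list HmJ') as [J [HJ <-]].
  exists J. intro x'.
  destruct (classic (ps m = pr x')) as [Hx'|Hx'].
  - rewrite <- (inRight_comp2 Hx Hx'), <- (inRight_comp2 Hn Hx'), HJ'.
    split.
    + intros [l [Hl Hlx]]. apply in_map_iff in Hl as [y [<- Hy]].
      exists y. split; [assumption|]. now apply (inRight_comp2 (HJ y Hy)).
    + intros [y [Hy Hyx]]. exists (comp m y). split; [now apply in_map|].
      now apply (inRight_comp2 (HJ y Hy)).
  - split.
    + intros [Hxx' _]. exfalso. apply Hx'. now rewrite (inRight_pr Hxx').
    + intros [y [Hy Hyx']]. exfalso. apply Hx'. rewrite (inRight_pr Hyx'). exact (HJ y Hy).
Qed.

Lemma FA_comp (l l' : L) : FA l -> ps l = pr l' -> FA (comp l l').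
Proof.
  intros Hl Hll' x Hx. apply Hl.
  exact (inRight_trans (inRight_comp Hll') Hx).
Qed.

Lemma FA_comp_inv (m d : L) : ps m = pr d -> FA (comp m d) -> FA d.
Proof.
  intros Hmd Hmd_FA x Hx n.
  assert (Hmx : ps m = pr x) by now rewrite (inRight_pr Hx).
  destruct (classic (ps m = pr n)) as [Hmn|Hmn].
  - apply (fin_aligned_at_comp_inv Hmx Hmn), Hmd_FA.
    now apply inRight_comp2.
  - apply fin_aligned_at_pr_neq. now rewrite <- Hmx.
Qed.

Lemma FA_ps (l : L) : FA l -> FA (ps l).
Proof.
  intro Hl. apply (FA_comp_inv (m := l)); [symmetry; apply pr_s|].
  now rewrite comp1r.
Qed.

Lemma FA_inRight_ps (m : L) : FA m -> forall x, inRight (ps m) x -> FA x.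
Proof.
  intros Hm x [a [Ha ->]]. rewrite ps_s in Ha. rewrite Ha, comp1l.
  apply (FA_comp_inv Ha), FA_comp; assumption.
Qed.

Lemma FA_fin_aligned (m n : L) : FA m ->
  exists J : list L, (forall l, In l J -> FA l) /\
    (forall x, (inRight m x /\ inRight n x) <-> (exists l, In l J /\ inRight l x)).
Proof.
  intros Hm. destruct (Hm m (inRight_refl m) n) as [J HJ].
  exists J. split; [|assumption].
  intros l Hl.
  assert (Hml : inRight m l) by (apply HJ; exists l; auto using inRight_refl).
  destruct Hml as [a [Ha ->]]. now apply FA_comp.
Qed.

End PGraphAlignment.

Definition Z2_group : Group.
Proof.
  refine {| gcar := Z * Z; gmul x y := (fst x + fst y, snd x + snd y)%Z;
            gone := (0, 0)%Z; ginv x := (- fst x, - snd x)%Z |};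
  intros; repeat match goal with p : (Z * Z)%type |- _ => destruct p end;
  simpl; f_equal; lia.
Defined.

Definition N2 (x : Z2_group) : Prop := (0 <= fst x /\ 0 <= snd x)%Z.

Lemma ple_N2 (p r : Z2_group) : ple N2 p r <-> (fst p <= fst r /\ snd p <= snd r)%Z.
Proof.
  unfold ple, N2; split.
  - intros [q [Hq <-]]. simpl. lia.
  - intros H. exists (fst r - fst p, snd r - snd p)%Z. simpl. split; [lia|].
    destruct r; simpl; f_equal; lia.
Qed.

Lemma WQLO_N2 : WQLO N2.
Proof.
  unfold WQLO, N2; simpl. split; [|split; [|split]].
  - lia.
  - lia.
  - intros [a b]; simpl; intros. f_equal; lia.
  - intros [p1 p2] [q1 q2] Hp Hq _. exists (Z.max p1 q1, Z.max p2 q2).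
    rewrite !ple_N2. simpl in *. split; [lia|]. split; [lia|]. split; [lia|].
    intros [u1 u2] _. rewrite !ple_N2. simpl. lia.
Qed.

(* V, A, B, C are the vertices; Mu goes from A to V (r Mu = V, s Mu = A), and
   Lam i = Mu Alpha_i = Nu Beta_i. Composites of non-composable pairs are junk. *)
Inductive square_edge := V | A | B | C | Mu | Nu | Alpha (i : nat) | Beta (i : nat) | Lam (i : nat).

Definition sq_r (x : square_edge) : square_edge :=
  match x with
  | V | Mu | Nu | Lam _ => V | A | Alpha _ => A | B | Beta _ => B | C => C
  end.

Definition sq_s (x : square_edge) : square_edge :=
  match x with
  | V => V | A | Mu => A | B | Nu => B | C | Alpha _ | Beta _ | Lam _ => C
  end.

Definition sq_comp (x y : square_edge) : square_edge :=
  match x, y with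
  | _, (V | A | B | C) => x
  | (V | A | B | C), _ => y
  | Mu, Alpha i | Nu, Beta i => Lam i
  | _, _ => x
  end.

Definition sq_deg (x : square_edge) : Z2_group :=
  match x with
  | V | A | B | C => (0, 0)%Z
  | Mu | Beta _ => (1, 0)%Z
  | Nu | Alpha _ => (0, 1)%Z
  | Lam _ => (1, 1)%Z
  end.

Definition sq_code (x : square_edge) : nat :=
  match x with
  | V => 0 | A => 1 | B => 2 | C => 3 | Mu => 4 | Nu => 5
  | Alpha i => 6 + 3 * i | Beta i => 7 + 3 * i | Lam i => 8 + 3 * i
  end.

Lemma sq_code_inj : forall x y, sq_code x = sq_code y -> x = y.
Proof. intros [] []; simpl; intro H; try reflexivity; try (f_equal; lia); lia. Qed.

Lemma sq_fact_ex (x : square_edge) (p q : Z2_group) : N2 p -> N2 q ->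
  sq_deg x = gmul p q ->
  exists m n, sq_s m = sq_r n /\ x = sq_comp m n /\ sq_deg m = p /\ sq_deg n = q.
Proof.
  destruct p as [p1 p2], q as [q1 q2]; unfold N2; simpl; intros Hp Hq E.
  destruct x; simpl in E; injection E; intros E2 E1;
  destruct (Z.eq_dec p1 0), (Z.eq_dec p2 0);
  let fits := (simpl; repeat split; f_equal; lia) in
  first
    [ exists V, V; fits | exists A, A; fits | exists B, B; fits | exists C, C; fits
    | exists V, Mu; fits | exists Mu, A; fits | exists V, Nu; fits | exists Nu, B; fits
    | exists A, (Alpha i); fits | exists (Alpha i), C; fits
    | exists B, (Beta i); fits | exists (Beta i), C; fits
    | exists V, (Lam i); fits | exists (Lam i), C; fits
    | exists Mu, (Alpha i); fits | exists Nu, (Beta i); fits ].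
Qed.

Lemma sq_fact_uniq (x : square_edge) (p q : Z2_group) (m n m' n' : square_edge) :
  N2 p -> N2 q ->
  sq_s m = sq_r n -> x = sq_comp m n -> sq_deg m = p -> sq_deg n = q ->
  sq_s m' = sq_r n' -> x = sq_comp m' n' -> sq_deg m' = p -> sq_deg n' = q ->
  m = m' /\ n = n'.
Proof.
  intros _ _ H Hx Hp Hq H' Hx' Hp' Hq'. subst x p q.
  destruct m, n; simpl in H; try discriminate;
  destruct m', n'; simpl in H'; try discriminate; simpl in *;
  split; congruence.
Qed.

Definition square_graph : PGraph N2.
Proof.
  refine {| pcar := square_edge; pr := sq_r; ps := sq_s; comp := sq_comp; deg := sq_deg;
            pcount := ex_intro _ sq_code sq_code_inj;
            fact_ex := sq_fact_ex; fact_uniq := sq_fact_uniq |};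
  try (intros []; reflexivity);
  try (intros [] []; simpl; try discriminate; reflexivity);
  try (intros [] [] []; simpl; try discriminate; reflexivity);
  intros []; unfold N2; simpl; lia.
Defined.

Lemma inRight_Lam (i : nat) (x : square_graph) : inRight (Lam i : square_graph) x -> x = Lam i.
Proof. intros [a [Ha ->]]. destruct a; try discriminate; reflexivity. Qed.

Lemma inRight_Mu_Nu (x : square_graph) :
  inRight (Mu : square_graph) x -> inRight (Nu : square_graph) x -> exists i, x = Lam i.
Proof.
  intros [a [Ha ->]] [b [Hb E]].
  destruct a; try discriminate; destruct b; try discriminate; simpl in E;
  try discriminate; eauto.
Qed.

Definition Lam_index (x : square_edge) : nat := match x with Lam i => i | _ => 0 end.

Lemma not_all_Lam_in (J : list square_edge) : ~ (forall i, In (Lam i) J).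
Proof.
  intro HJ. set (k := list_max (map Lam_index J)).
  assert (Hbound := proj1 (list_max_le _ k) (le_n k)).
  rewrite Forall_forall in Hbound.
  assert (Hk : Lam_index (Lam (S k)) <= k) by (apply Hbound, in_map, HJ).
  simpl in Hk. lia.
Qed.

Lemma Mu_Nu_not_fin_aligned : ~ fin_aligned_at (Mu : square_graph) Nu.
Proof.
  intros [J HJ]. apply (not_all_Lam_in (J := J)). intro i.
  destruct (proj1 (HJ (Lam i))) as [l [Hl Hli]].
  { split; [exists (Alpha i) | exists (Beta i)]; split; reflexivity. }
  assert (Hl_MuNu : inRight (Mu : square_graph) l /\ inRight (Nu : square_graph) l)
    by (apply HJ; exists l; auto using inRight_refl).
  destruct (inRight_Mu_Nu (proj1 Hl_MuNu) (proj2 Hl_MuNu)) as [j ->].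
  now rewrite (inRight_Lam Hli).
Qed.

Lemma FA_Lam0_not_FA_V : FA (Lam 0 : square_graph) /\ ~ FA (V : square_graph).
Proof.
  split.
  - intros m Hm n. rewrite (inRight_Lam Hm).
    apply fin_aligned_at_of_right_singleton, inRight_Lam.
  - intro HV. apply Mu_Nu_not_fin_aligned, HV.
    exists Mu. split; reflexivity.
Qed.

Theorem lemma3p5 :
  (forall (Q : Group) (P : Q -> Prop), WQLO P -> forall L : PGraph P,
     (* (1) right ideal *)
     (forall l l' : L, FA l -> ps l = pr l' -> FA (comp l l')) /\
     (* (2) *)
     (forall m d : L, ps m = pr d -> FA (comp m d) -> FA d) /\
     (* (3) closed under s *)
     (forall l : L, FA l -> FA (ps l)) /\
     (* (5) s(μ)Λ ⊆ FA(Λ) *)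
     (forall m : L, FA m -> forall x : L, inRight (ps m) x -> FA x) /\
     (* (6) *)
     (forall m n : L, FA m -> FA n ->
        exists J : list L, (forall l, In l J -> FA l) /\
          (forall x, (inRight m x /\ inRight n x) <->
                     (exists l, In l J /\ inRight l x)))) /\
  (* (4) FA(Λ) need not be closed under r *)
  (exists (Q : Group) (P : Q -> Prop), WQLO P /\
     exists (L : PGraph P) (l : L), FA l /\ ~ FA (pr l)).
Proof.
  split.
  - intros Q P _ L.
    split; [exact (@FA_comp _ _ L)|].
    split; [exact (@FA_comp_inv _ _ L)|].
    split; [exact (@FA_ps _ _ L)|].
    split; [exact (@FA_inRight_ps _ _ L)|].
    intros m n Hm _. exact (FA_fin_aligned n Hm).
  - exists Z2_group, N2. split; [exact WQLO_N2|].
    exists square_graph, (Lam 0). exact FA_Lam0_not_FA_V.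
Qed.
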